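(* Let $\alpha$ be a composition and $n\ge1$. Then $$\{w(\alpha): w\in CRHW_n,\ w(\alpha)\neq0\}=\{\beta:\ \alpha<_c\beta \text{ and } \beta/\!\!/\alpha \text{ is an nc border strip with } n \text{ boxes}\}.$$
   Context: A composition is a finite sequence $\alpha=(\alpha_1,\dots,\alpha_k)$ of positive integers; $\ell(\alpha)=k$. Its diagram is the set of boxes $(i,j)$, $1\le i\le\ell(\alpha)$, $1\le j\le\alpha_i$, rows numbered top to bottom, columns left to right. For compositions $\gamma=(\gamma_1,\dots,\gamma_l)$, $\delta$ write $\gamma\lessdot_c\delta$ if $\delta=(1,\gamma_1,\dots,\gamma_l)$ or $\delta=(\gamma_1,\dots,\gamma_k+1,\dots,\gamma_l)$ for some $k$ with $\gamma_i\neq\gamma_k$ for all $i<k$; $<_c$ is the transitive closure. For $\gamma<_c\delta$, $\delta/\!\!/\gamma$ is the set of boxes of $\delta$ not in the inner shape, the inner shape being the boxes $(\ell(\delta)-\ell(\gamma)+i,j)$, $1\le i\le\ell(\gamma)$, $1\le j\le\gamma_i$. $\mathrm{supp}(\beta/\!\!/\alpha)$ is the set of columns containing a box of $\beta/\!\!/\alpha$; $\beta/\!\!/\alpha$ is an interval shape if this set is a set of consecutive integers. An interval shape is an nc border strip if (1) whenever $(i,1),(i,2)\in\beta/\!\!/\alpha$, the box $(i,1)$ is the bottommost box of column 1 of $\beta/\!\!/\alpha$, and (2) whenever $(i,j),(i,j+1)\in\beta/\!\!/\alpha$ with $j\ge2$, the box $(i,j)$ is the topmost box of column $j$ of $\beta/\!\!/\alpha$.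 Box-adding operators: $\mathfrak t_1(\alpha)=(1,\alpha_1,\dots,\alpha_k)$; for $i\ge2$, $\mathfrak t_i(\alpha)$ increases the leftmost part of $\alpha$ equal to $i-1$ by $1$, and is $0$ if there is no such part; $\mathfrak t_i(0)=0$. A word $w=\mathfrak t_{i_1}\cdots\mathfrak t_{i_n}$ acts by $w(\alpha)=\mathfrak t_{i_1}(\cdots\mathfrak t_{i_n}(\alpha))$. It is a reverse hookword if $i_1\le\cdots\le i_{k+1}>i_{k+2}>\cdots>i_n$ for some $0\le k\le n-1$, connected if $\{i_1,\dots,i_n\}$ is a set of consecutive integers; $CRHW_n$ is the set of connected reverse hookwords of length $n$. *)

From mathcomp Require Import all_boot.
From Stdlib Require Import Relations.Relation_Operators.
Set Implicit Arguments. Unset Strict Implicit. Unset Printing Implicit Defensive.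

Definition composition (a : seq nat) : bool := all (fun x => 0 < x) a.

(* Part alpha_k (1-indexed) is nth 0 a k.-1; here we use 0-indexed k. *)
Definition cover_c (g d : seq nat) : Prop :=
  d = 1 :: g \/
  exists k, k < size g /\
    (forall i, i < k -> nth 0 g i != nth 0 g k) /\
    d = set_nth 0 g k (nth 0 g k).+1.

Definition lt_c (g d : seq nat) : Prop := clos_trans (seq nat) cover_c g d.

(* Boxes are pairs (row, column), 1-indexed, rows top to bottom. *)
Definition in_diagram (d : seq nat) (b : nat * nat) : bool :=
  [&& 1 <= b.1, b.1 <= size d, 1 <= b.2 & b.2 <= nth 0 d b.1.-1].

Definition in_inner (d g : seq nat) (b : nat * nat) : bool :=
  [&& size d - size g < b.1, b.1 <= size d, 1 <= b.2 &
      b.2 <= nth 0 g (b.1 - (size d - size g)).-1].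

Definition in_skew (d g : seq nat) (b : nat * nat) : bool :=
  in_diagram d b && ~~ in_inner d g b.

Definition skew_boxes (d g : seq nat) : seq (nat * nat) :=
  [seq b <- flatten [seq [seq (i, j) | j <- iota 1 (nth 0 d i.-1)]
                    | i <- iota 1 (size d)] | ~~ in_inner d g b].

Definition in_supp (d g : seq nat) (j : nat) : Prop :=
  exists i, in_skew d g (i, j).

Definition interval_shape (d g : seq nat) : Prop :=
  forall j1 j j2, in_supp d g j1 -> in_supp d g j2 -> j1 <= j <= j2 ->
    in_supp d g j.

Definition nc_border_strip (d g : seq nat) : Prop :=
  interval_shape d g /\
  (forall i, in_skew d g (i, 1) -> in_skew d g (i, 2) ->
     forall i', in_skew d g (i', 1) -> i' <= i) /\
  (forall i j, 2 <= j -> in_skew d g (i, j) -> in_skew d g (i, j.+1) ->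
     forall i', in_skew d g (i', j) -> i <= i').

(* Box-adding operators; None plays the role of 0.  Letters are >= 1;
   t_0 is not used (and is set to 0). *)
Definition t_op (i : nat) (a : seq nat) : option (seq nat) :=
  match i with
  | 0 => None
  | 1 => Some (1 :: a)
  | i'.+1 => if i' \in a then
               Some (set_nth 0 a (index i' a) (nth 0 a (index i' a)).+1)
             else None
  end.

(* w = t_{i1} ... t_{in} acting by w(a) = t_{i1}(... t_{in}(a)) *)
Definition act (w : seq nat) (a : seq nat) : option (seq nat) :=
  foldr (fun i acc => obind (t_op i) acc) (Some a) w.

Definition reverse_hookword (w : seq nat) : Prop :=
  exists k, k < size w /\ sorted leq (take k.+1 w) /\
            sorted (fun a b => b < a) (drop k w).

Definition connected_word (w : seq nat) : Prop :=
  forall a b c, a \in w -> c \in w -> a <= b <= c -> b \in w.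

Definition CRHW (n : nat) (w : seq nat) : Prop :=
  size w = n /\ all (fun i => 0 < i) w /\ reverse_hookword w /\ connected_word w.

From mathcomp Require Import all_boot zify.
From Stdlib Require Import Relations.Relation_Operators.
Set Implicit Arguments. Unset Strict Implicit. Unset Printing Implicit Defensive.

(* A word [w = t_{i_1} ... t_{i_n}] adds one box in column [i_j] for each
   letter, so the columns of [w(a) // a] are exactly the letters of [w]: the
   skew shape has [n] boxes, and it is an interval shape iff [w] is
   connected.  For a reverse hookword, the strictly decreasing tail acts first
   and lays down a horizontal strip, and the weakly increasing head then adds
   each box at the topmost row of the right length in weakly decreasing
   columns; tracking where boxes land gives the two nc conditions.

   Conversely, peel an nc border strip [b // a] with [a <_c b] box by box.  If
   some row has boxes in two adjacent columns, the lowest such column [j] is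
   absorbed into [a] by [t_j], producing a letter of the decreasing tail;
   otherwise the lowest box of the leftmost column [m] is removed from [b] by
   undoing [t_m], producing a letter of the increasing head.  That these
   operators act on the right rows is guaranteed by the nc conditions together
   with an invariant inherited from the leftmost-part rule of [<_c]. *)

Lemma size_set_nth_lt (T : Type) (x0 : T) s k v :
  k < size s -> size (set_nth x0 s k v) = size s.
Proof. by move=> lt_k; rewrite size_set_nth; apply/maxn_idPr. Qed.

Lemma set_nth_nth (T : Type) (x0 : T) s k :
  k < size s -> set_nth x0 s k (nth x0 s k) = s.
Proof.
move=> lt_k; apply: (@eq_from_nth _ x0); first by rewrite size_set_nth_lt.
by move=> i _; rewrite nth_set_nth /=; case: eqP => // ->.
Qed.

Lemma index_nth_first (T : eqType) (x0 : T) s k : k < size s ->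
  (forall i, i < k -> nth x0 s i != nth x0 s k) -> index (nth x0 s k) s = k.
Proof.
move=> lt_k before_k; have := index_nth x0 lt_k.
rewrite leq_eqVlt => /orP [/eqP //|lt_idx].
by have := before_k _ lt_idx; rewrite nth_index ?mem_nth ?eqxx.
Qed.

Lemma mem_leq_sumn (s : seq nat) x : x \in s -> x <= sumn s.
Proof.
elim: s => [|y s IH] //=; rewrite in_cons => /orP [/eqP ->|/IH]; lia.
Qed.

Lemma sumn_le_nth s t : size s = size t ->
  (forall r, r < size s -> nth 0 t r <= nth 0 s r) -> sumn t <= sumn s.
Proof.
elim: s t => [|x s IH] [|y t] //= [size_st] le_ts.
have /= := le_ts 0 isT; have := IH t size_st (fun r => le_ts r.+1); lia.
Qed.

Lemma sumn_subn_nth s t : size s = size t ->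
  (forall r, r < size s -> nth 0 t r <= nth 0 s r) ->
  sumn [seq nth 0 s i.-1 - nth 0 t i.-1 | i <- iota 1 (size s)] = sumn s - sumn t.
Proof.
elim: s t => [|x s IH] [|y t] //= [size_st] le_ts.
have le_ts' : forall r, r < size s -> nth 0 t r <= nth 0 s r by move=> r; apply: (le_ts r.+1).
rewrite -[2]/(1 + 1) iotaDl -map_comp.
rewrite (_ : map _ _ = [seq nth 0 s i.-1 - nth 0 t i.-1 | i <- iota 1 (size s)]); last first.
  by apply/eq_in_map => i; rewrite mem_iota => /andP [+ _]; case: i.
rewrite IH //; have /= := le_ts 0 isT; have := sumn_le_nth size_st le_ts'; lia.
Qed.

Lemma eq_from_sumn_le s t : size s = size t ->
  (forall r, r < size s -> nth 0 t r <= nth 0 s r) -> sumn s <= sumn t -> s = t.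
Proof.
elim: s t => [|x s IH] [|y t] //= [size_st] le_ts le_sum.
have /= le_yx := le_ts 0 isT; have le_ts' := fun r => le_ts r.+1.
have le_sum' := sumn_le_nth size_st le_ts'.
have eq_xy : x = y by lia.
by rewrite eq_xy (IH t) //; lia.
Qed.

Lemma sumn_lt_nth_exists s t : size s = size t ->
  (forall r, r < size s -> nth 0 t r <= nth 0 s r) -> sumn t < sumn s ->
  exists2 r, r < size s & nth 0 t r < nth 0 s r.
Proof.
elim: s t => [|x s IH] [|y t] //= [size_st] le_ts lt_sum.
case: (ltnP y x) => [lt_yx|le_xy]; first by exists 0.
have [|r lt_r lt_nth] := IH t size_st (fun r => le_ts r.+1); first lia.
by exists r.+1.
Qed.

Lemma count_gt_iota1 c n : count (fun j => c < j) (iota 1 n) = n - c.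
Proof.
elim: n => [|n IH] //; rewrite -[n.+1]addn1 iotaD count_cat IH /=; case: ltnP; lia.
Qed.

Lemma composition_nth_gt0 s k : composition s -> k < size s -> 0 < nth 0 s k.
Proof. by move=> comp_s lt_k; apply: (allP comp_s); rewrite mem_nth. Qed.

Lemma composition_set_nth s k v : k < size s ->
  composition s -> 0 < v -> composition (set_nth 0 s k v).
Proof.
rewrite /composition; elim: s k => [|y s IH] [|k] //= lt_k /andP [y_gt0 comp_s] v_gt0.
- by rewrite v_gt0 comp_s.
- by rewrite y_gt0 IH.
Qed.

Lemma t_opP x b c : t_op x b = Some c ->
  (x = 1 /\ c = 1 :: b) \/
  (1 < x /\ exists k, [/\ k < size b, nth 0 b k = x.-1,
     forall r, r < size b -> nth 0 b r = x.-1 -> k <= r & c = set_nth 0 b k x]).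
Proof.
case: x => [|[|i]] //=; first by move=> [<-]; left.
case: ifP => // mem_i [<-]; right; split=> //; exists (index i.+1 b).
rewrite index_mem nth_index //; split=> // r lt_r nth_r.
by rewrite -nth_r index_nth.
Qed.

Lemma t_opE x b : 1 < x ->
  t_op x b = if x.-1 \in b then Some (set_nth 0 b (index x.-1 b) x) else None.
Proof. by case: x => [|[|i]] //= _; case: ifP => // mem_i; rewrite nth_index. Qed.

Lemma t_op_gt0 x b b' : t_op x b = Some b' -> 0 < x.
Proof. by case: x. Qed.

Lemma t_op_sumn x b c : t_op x b = Some c -> sumn c = (sumn b).+1.
Proof.
case/t_opP => [[_ ->] //|[x_gt1 [k [lt_k nth_k _ ->]]]].
rewrite sumn_set_nth_ltn // nth_k; lia.
Qed.

Lemma t_op_composition x b c :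
  composition b -> t_op x b = Some c -> composition c.
Proof.
move=> comp_b /t_opP [[_ ->] //|[x_gt1 [k [lt_k _ _ ->]]]].
by apply: composition_set_nth => //; lia.
Qed.

Lemma t_op_cover_c x b c : t_op x b = Some c -> cover_c b c.
Proof.
case/t_opP => [[_ ->]|[x_gt1 [k [lt_k nth_k min_k ->]]]]; first by left.
right; exists k; split=> //; rewrite nth_k; split; last by congr set_nth; lia.
move=> i lt_ik; apply/eqP => nth_i.
by have := min_k i (ltn_trans lt_ik lt_k) nth_i; rewrite leqNgt lt_ik.
Qed.

Lemma cover_c_t_op b b' : composition b -> cover_c b b' ->
  exists x, t_op x b = Some b'.
Proof.
move=> comp_b [->|[k [lt_k [first_k ->]]]]; first by exists 1.
exists (nth 0 b k).+1.
by rewrite t_opE /= ?ltnS ?composition_nth_gt0 // mem_nth // index_nth_first.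
Qed.

Lemma act_cat u v b c : act v b = Some c -> act (u ++ v) b = act u c.
Proof. by move=> act_v; elim: u => [|x u IH] //=; rewrite IH. Qed.

Lemma act_cat_None u v b : act v b = None -> act (u ++ v) b = None.
Proof. by move=> act_v; elim: u => [|x u IH] //=; rewrite IH. Qed.

Lemma act_consP x w b c : act (x :: w) b = Some c ->
  exists2 d, act w b = Some d & t_op x d = Some c.
Proof. by rewrite /=; case: (act w b) => //= d; exists d. Qed.

Lemma act_gt0 w b c : act w b = Some c -> all (fun i => 0 < i) w.
Proof.
by elim: w c => [|x w IH] c //= /act_consP [d /IH -> /t_op_gt0 ->].
Qed.

Lemma act_sumn w b c : act w b = Some c -> sumn c = sumn b + size w.
Proof.
elim: w c => [|x w IH] c; first by move=> [<-]; rewrite addn0.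
by case/act_consP => d /IH sumn_d /t_op_sumn; rewrite sumn_d /=; lia.
Qed.

Lemma lt_c_act a b : composition a -> lt_c a b ->
  composition b /\ exists2 w, 0 < size w & act w a = Some b.
Proof.
move=> + lt_ab; elim: lt_ab => [x y cov_xy|x y z _ IH1 _ IH2] comp_x.
  have [t t_xy] := cover_c_t_op comp_x cov_xy.
  by split; [apply: t_op_composition t_xy | exists [:: t]; rewrite //= t_xy].
have [comp_y [v1 v1_gt0 act_v1]] := IH1 comp_x.
have [comp_z [v2 v2_gt0 act_v2]] := IH2 comp_y.
split=> //; exists (v2 ++ v1); first by rewrite size_cat; lia.
by rewrite (act_cat _ act_v1).
Qed.

Lemma act_lt_c w a b : 0 < size w -> act w a = Some b -> lt_c a b.
Proof.
elim: w b => [|x [|y w] IH] b // _ /act_consP [d act_d /t_op_cover_c cov_db].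
  by move: act_d cov_db => [<-]; apply: t_step.
exact: t_trans (IH d isT act_d) (t_step _ _ _ _ cov_db).
Qed.

Section SkewShape.
Variable a : seq nat.

(* Rows are indexed from 0 and columns from 1; the inner shape [a] is
   bottom-justified in [b], as in the definition of [in_inner]. *)
Definition row_shift (b : seq nat) := size b - size a.
Definition inner_row (b : seq nat) r := if r < row_shift b then 0 else nth 0 a (r - row_shift b).
Definition skew_box (b : seq nat) r c := [&& r < size b, inner_row b r < c & c <= nth 0 b r].
Definition contains (b : seq nat) :=
  size a <= size b /\ forall r, r < size b -> inner_row b r <= nth 0 b r.

Lemma in_innerN b i j : 0 < i -> i <= size b -> 0 < j ->
  ~~ in_inner b a (i, j) = (inner_row b i.-1 < j).
Proof.
rewrite /in_inner /inner_row /row_shift /=; case: i => [|i] //= _ le_i j_gt0.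
rewrite le_i j_gt0 /=; case: (ltnP i (size b - size a)) => lt_i.
  by rewrite ltnS (leqNgt _ i) lt_i.
by rewrite ltnS lt_i subSn //= -ltnNge.
Qed.

Lemma in_skewE b i j : in_skew b a (i, j) = (0 < i) && skew_box b i.-1 j.
Proof.
rewrite /in_skew /in_diagram /skew_box /=.
case: i => [|i] //=; case: (ltnP i (size b)) => //= lt_i.
by case: j => [|j] //=; rewrite in_innerN //= andbC.
Qed.

Lemma in_suppE b j : in_supp b a j <-> exists r, skew_box b r j.
Proof.
split=> [[i]|[r box_r]]; first by rewrite in_skewE => /andP [_ box_i]; exists i.-1.
by exists r.+1; rewrite in_skewE.
Qed.

Lemma skew_box_col0 b r : skew_box b r 0 = false.
Proof. by rewrite /skew_box ltn0 andbF. Qed.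

Lemma skew_box_row b r c : skew_box b r c -> r < size b.
Proof. by case/andP. Qed.

Lemma skew_box_col b r c : skew_box b r c -> c <= nth 0 b r.
Proof. by case/and3P. Qed.

Lemma skew_box_self r c : skew_box a r c = false.
Proof.
rewrite /skew_box /inner_row /row_shift subnn ltn0 subn0.
by apply/and3P => -[_ lt_c le_c]; move: (leq_trans lt_c le_c); rewrite ltnn.
Qed.

Lemma contains_self : contains a.
Proof. by split=> // r _; rewrite /inner_row /row_shift subnn ltn0 subn0. Qed.

Definition inner_pad (b : seq nat) := nseq (row_shift b) 0 ++ a.

Lemma nth_inner_pad b r : nth 0 (inner_pad b) r = inner_row b r.
Proof. by rewrite /inner_pad /inner_row nth_cat size_nseq nth_nseq; case: ltnP. Qed.

Lemma size_inner_pad b : size a <= size b -> size (inner_pad b) = size b.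
Proof. by rewrite /inner_pad size_cat size_nseq /row_shift; lia. Qed.

Lemma sumn_inner_pad b : sumn (inner_pad b) = sumn a.
Proof. by rewrite /inner_pad sumn_cat sumn_nseq. Qed.

Section Contained.
Variable b : seq nat.
Hypothesis a_in_b : contains b.

Let size_pad : size b = size (inner_pad b).
Proof. by rewrite size_inner_pad //; case: a_in_b. Qed.

Let le_pad r : r < size b -> nth 0 (inner_pad b) r <= nth 0 b r.
Proof. by rewrite nth_inner_pad; case: a_in_b => _; apply. Qed.

Lemma size_skew_boxes : size (skew_boxes b a) = sumn b - sumn a.
Proof.
rewrite /skew_boxes size_filter count_flatten -map_comp -(sumn_inner_pad b).
rewrite -(sumn_subn_nth size_pad le_pad); congr sumn; apply/eq_in_map => i.
rewrite mem_iota => /andP [i_gt0 le_i] /=; rewrite count_map nth_inner_pad.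
rewrite -count_gt_iota1; apply/eq_in_count => j; rewrite mem_iota => /andP [j_gt0 _].
by rewrite /= in_innerN // -ltnS -add1n.
Qed.

Lemma contains_sumn : sumn a <= sumn b.
Proof. by rewrite -(sumn_inner_pad b); apply: sumn_le_nth. Qed.

Lemma skew_box_exists : sumn a < sumn b -> exists r c, skew_box b r c.
Proof.
rewrite -(sumn_inner_pad b) => /(sumn_lt_nth_exists size_pad le_pad) [r lt_r].
by rewrite nth_inner_pad => lt_inner; exists r, (nth 0 b r); rewrite /skew_box lt_r lt_inner /=.
Qed.

(* The first row of [b] is positive, so [a] cannot sit strictly below the top. *)
Lemma contains_sumn_eq : composition b -> sumn b = sumn a -> b = a.
Proof.
move=> comp_b eq_sum.
have eq_pad : b = inner_pad b.
  by apply: eq_from_sumn_le => //; rewrite sumn_inner_pad eq_sum.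
have shift0 : row_shift b = 0.
  case: (posnP (row_shift b)) => // shift_gt0.
  have lt0 : 0 < size b by rewrite /row_shift in shift_gt0; lia.
  have := composition_nth_gt0 comp_b lt0.
  by rewrite eq_pad nth_inner_pad /inner_row shift_gt0.
by rewrite eq_pad /inner_pad shift0.
Qed.

End Contained.
End SkewShape.

Section OuterBoxes.
Variable a : seq nat.

Lemma inner_row_set_nth b k v r : k < size b ->
  inner_row a (set_nth 0 b k v) r = inner_row a b r.
Proof. by move=> lt_k; rewrite /inner_row /row_shift size_set_nth_lt. Qed.

Lemma skew_box_set_nth b k x r c : k < size b -> inner_row a b k < x ->
  nth 0 b k = x.-1 ->
  skew_box a (set_nth 0 b k x) r c = skew_box a b r c || (r == k) && (c == x).
Proof.
move=> lt_k lt_inner nth_k.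
rewrite /skew_box inner_row_set_nth // size_set_nth_lt // nth_set_nth /=.
case: eqP => [->|_] /=; last by rewrite orbF.
rewrite lt_k nth_k /=; case: (ltnP (inner_row a b k) c) => [lt_c|le_c] /=.
  by case: eqP => [->|ne_cx]; rewrite ?leqnn ?orbT // orbF; apply/idP/idP; lia.
by apply/esym/eqP; lia.
Qed.

Lemma skew_box_set_nth_pred b k m r c : k < size b -> inner_row a b k < m ->
  nth 0 b k = m ->
  skew_box a (set_nth 0 b k m.-1) r c = skew_box a b r c && ~~ ((r == k) && (c == m)).
Proof.
move=> lt_k lt_inner nth_k.
rewrite /skew_box inner_row_set_nth // size_set_nth_lt // nth_set_nth /=.
case: eqP => [->|_] /=; last by rewrite andbT.
rewrite lt_k nth_k /=; case: eqP => [->|ne_cm] /=; first by rewrite andbF; apply/negbTE; lia.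
by rewrite andbT; apply/idP/idP; lia.
Qed.

Lemma inner_row_cons0 b : size a <= size b -> inner_row a (1 :: b) 0 = 0.
Proof. by move=> le_ab; rewrite /inner_row /row_shift /= subSn. Qed.

Lemma inner_row_consS b r : size a <= size b ->
  inner_row a (1 :: b) r.+1 = inner_row a b r.
Proof. by move=> le_ab; rewrite /inner_row /row_shift /= subSn // ltnS subSS. Qed.

Lemma skew_box_cons0 b c : size a <= size b -> skew_box a (1 :: b) 0 c = (c == 1).
Proof. by move=> le_ab; rewrite /skew_box inner_row_cons0 //=; case: c => [|[|c]]. Qed.

Lemma skew_box_consS b r c : size a <= size b ->
  skew_box a (1 :: b) r.+1 c = skew_box a b r c.
Proof. by move=> le_ab; rewrite /skew_box inner_row_consS. Qed.

Lemma contains_t_op x b c : contains a b -> t_op x b = Some c -> contains a c.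
Proof.
move=> [le_ab inner_le] /t_opP [[_ ->]|[x_gt1 [k [lt_k nth_k _ ->]]]].
  split=> [|[|r] lt_r]; rewrite ?inner_row_cons0 ?inner_row_consS //=; last exact: inner_le.
  exact: leqW.
split=> [|r]; rewrite size_set_nth_lt // => lt_r.
rewrite inner_row_set_nth // nth_set_nth /=.
by case: eqP => [->|_]; [have := inner_le _ lt_k; lia | exact: inner_le].
Qed.

Lemma contains_act w b c : contains a b -> act w b = Some c -> contains a c.
Proof.
move=> a_in_b; elim: w c => [|x w IH] c; first by move=> [<-].
by case/act_consP => d /IH; apply: contains_t_op.
Qed.

Lemma skew_col_t_op x b c : contains a b -> t_op x b = Some c ->
  forall j, (exists r, skew_box a c r j) <-> j = x \/ exists r, skew_box a b r j.
Proof.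
move=> [le_ab inner_le] /t_opP [[-> ->]|[x_gt1 [k [lt_k nth_k _ ->]]]] j.
  split=> [[[|r]]|[->|[r box_r]]].
  - by rewrite skew_box_cons0 // => /eqP; left.
  - by rewrite skew_box_consS // => box_r; right; exists r.
  - by exists 0; rewrite skew_box_cons0.
  - by exists r.+1; rewrite skew_box_consS.
have lt_inner : inner_row a b k < x by have := inner_le _ lt_k; lia.
split=> [[r]|[->|[r box_r]]]; rewrite ?skew_box_set_nth //.
- by case/orP=> [box_r|/andP [_ /eqP ->]]; [right; exists r | left].
- by exists k; rewrite skew_box_set_nth // !eqxx orbT.
- by exists r; rewrite skew_box_set_nth // box_r.
Qed.

Lemma skew_col_act w b : act w a = Some b ->
  forall j, (exists r, skew_box a b r j) <-> j \in w.
Proof.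
elim: w b => [|x w IH] b.
  by move=> [<-] j; split=> // -[r]; rewrite skew_box_self.
case/act_consP => d act_d t_d j.
rewrite (skew_col_t_op (contains_act (contains_self a) act_d) t_d) in_cons (IH _ act_d).
by split=> [[->|->]|/orP [/eqP ->|->]]; rewrite ?eqxx ?orbT; auto.
Qed.

Lemma t_op_skew_box x b c : contains a b -> t_op x b = Some c -> 1 < x ->
  exists k, [/\ k < size b, nth 0 b k = x.-1,
    forall r, r < size b -> nth 0 b r = x.-1 -> k <= r,
    size c = size b &
    [/\ forall r j, skew_box a c r j = skew_box a b r j || (r == k) && (j == x),
        forall r, nth 0 c r = if r == k then x else nth 0 b r &
        forall r, inner_row a c r = inner_row a b r]].
Proof.
move=> [_ inner_le] /t_opP [[-> _] //|[_ [k [lt_k nth_k min_k ->]]]] x_gt1.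
exists k; split; rewrite ?size_set_nth_lt //; split=> [r j|r|r].
- by rewrite skew_box_set_nth //; have := inner_le _ lt_k; lia.
- by rewrite nth_set_nth.
- exact: inner_row_set_nth.
Qed.

End OuterBoxes.

Definition nc_first_col a b := forall r r',
  skew_box a b r 1 -> skew_box a b r 2 -> skew_box a b r' 1 -> r' <= r.

Definition nc_upper_cols a b := forall r r' j, 2 <= j ->
  skew_box a b r j -> skew_box a b r j.+1 -> skew_box a b r' j -> r <= r'.

Lemma nc_border_stripE a b : nc_border_strip b a <->
  [/\ interval_shape b a, nc_first_col a b & nc_upper_cols a b].
Proof.
rewrite /nc_border_strip /nc_first_col /nc_upper_cols.
split=> [[int [nc1 nc2]]|[int nc1 nc2]]; split=> //.
- move=> r r' box1 box2 box1'.
  by have := nc1 r.+1; rewrite !in_skewE => /(_ box1 box2 r'.+1); rewrite in_skewE; apply.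
- move=> r r' j le2j box1 box2 box1'.
  by have := nc2 r.+1 j le2j; rewrite !in_skewE => /(_ box1 box2 r'.+1); rewrite in_skewE; apply.
- split=> [i|i j le2j]; rewrite !in_skewE => /andP [i_gt0 box1] /andP [_ box2] i';
    rewrite in_skewE => /andP [i'_gt0 box1'].
    by have := nc1 _ _ box1 box2 box1'; lia.
  by have := nc2 _ _ _ le2j box1 box2 box1'; lia.
Qed.

Section ForwardInvariants.
Variable a : seq nat.
Local Notation box := (skew_box a).

Definition col_unique e b := forall r r' c, c < e -> box b r c -> box b r' c -> r = r'.

(* A box in column [c] lies above every row of length [c - 1], so a later
   [t_c] adds its box strictly below it. *)
Definition boxes_above_rows e b := forall r r' c, 2 <= c -> c <= e ->
  box b r c -> r' < size b -> nth 0 b r' = c.-1 -> r < r'.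

Definition increasing_inv d b :=
  [/\ col_unique d.+1 b, forall r c, box b r c -> c <= d & boxes_above_rows d b].

Definition hook_inv e b :=
  [/\ nc_first_col a b, nc_upper_cols a b, col_unique e b & boxes_above_rows e b].

Lemma increasing_inv_self : increasing_inv 0 a.
Proof. by split=> [r r' c|r c|r r' c]; rewrite skew_box_self. Qed.

Lemma increasing_inv_t_op d x b c : contains a b -> increasing_inv d b -> d < x ->
  t_op x b = Some c -> increasing_inv x c.
Proof.
move=> a_in_b [uniq_b le_d above_b] lt_dx t_b.
case: (ltnP 1 x) => [x_gt1|x_le1].
  have [k [lt_k nth_k min_k size_c [box_c nth_c _]]] := t_op_skew_box a_in_b t_b x_gt1.
  split=> [r r' j lt_j|r j|r r' j le2j le_jx]; rewrite ?box_c.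
  - move=> /orP [box_r|/andP [/eqP -> /eqP eq_j]] /orP [box_r'|/andP [/eqP -> /eqP eq_j']].
    + by apply: (uniq_b _ _ _ _ box_r box_r'); rewrite ltnS (le_d _ _ box_r).
    + by have := le_d _ _ box_r; lia.
    + by have := le_d _ _ box_r'; lia.
    + by [].
  - by case/orP=> [/le_d|/andP [_ /eqP ->]]; lia.
  rewrite size_c nth_c; case/orP=> [box_r|/andP [/eqP -> /eqP ->]] lt_r'.
    have le_jd := le_d _ _ box_r.
    by case: eqP => [_|_ nth_r']; [lia | apply: above_b box_r lt_r' nth_r'].
  case: eqP => [_|ne_r'k nth_r']; first lia.
  by rewrite ltn_neqAle eq_sym; apply/andP; split; [apply/eqP | apply: min_k].
have x1 : x = 1 by have := t_op_gt0 t_b; lia.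
have no_box r j : box b r j = false.
  apply/negP => box_r; have := le_d _ _ box_r; rewrite (_ : d = 0); last lia.
  by case: j box_r => [|j]; rewrite ?skew_box_col0.
have le_ab : size a <= size b by case: a_in_b.
move: t_b; rewrite x1 => -[<-].
split=> [[|r] [|r'] j|[|r] j|[|r] r' j le2j];
  rewrite ?skew_box_cons0 ?skew_box_consS ?no_box //.
- by move/eqP->.
- by move=> le_j1; lia.
Qed.

Lemma hook_inv_of_increasing d e b : increasing_inv d b -> hook_inv e b.
Proof.
case=> uniq_b le_d above_b.
have uniq r r' c : box b r c -> box b r' c -> r = r'.
  by move=> box_r; apply: (uniq_b _ _ _ _ box_r); rewrite ltnS (le_d _ _ box_r).
split=> [r r' box1 _ box1'|r r' j _ box_j _ box_j'|r r' c _|r r' c le2c _ box_r].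
- by rewrite (uniq _ _ _ box1 box1').
- by rewrite (uniq _ _ _ box_j box_j').
- exact: uniq.
- by apply: (above_b r r' c le2c (le_d _ _ box_r) box_r).
Qed.

Lemma hook_inv_t_op e x b c : contains a b -> hook_inv e b -> x <= e ->
  t_op x b = Some c -> hook_inv x c.
Proof.
move=> a_in_b [nc1 nc2 uniq_b above_b] le_xe t_b.
case: (ltnP 1 x) => [x_gt1|x_le1]; last first.
  have x1 : x = 1 by have := t_op_gt0 t_b; lia.
  have le_ab : size a <= size b by case: a_in_b.
  move: t_b; rewrite x1 => -[<-].
  split=> [[|r] [|r']|[|r] [|r'] j le2j|r r' j lt_j1|r r' j le2j le_j1];
    rewrite ?skew_box_cons0 ?skew_box_consS //; try lia.
  - by move=> box1 box2 box1'; have := nc1 _ _ box1 box2 box1'.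
  - by move=> box_j box_j1 box_j'; have := nc2 _ _ _ le2j box_j box_j1 box_j'.
  - by rewrite (_ : j = 0) ?skew_box_col0 //; lia.
have [k [lt_k nth_k min_k size_c [box_c nth_c _]]] := t_op_skew_box a_in_b t_b x_gt1.
have no_box_k j : x < j -> box b k j = false.
  by move=> lt_xj; apply/negP => /skew_box_col; rewrite nth_k; lia.
split=> [r r'|r r' j le2j|r r' j lt_jx|r r' j le2j le_jx]; rewrite ?box_c.
- rewrite (_ : 1 == x = false) ?andbF ?orbF => [box1|]; last by apply/eqP; lia.
  case/orP=> [box2|/andP [_ /eqP x2]] box1'; first exact: nc1 box1 box2 box1'.
  by rewrite (uniq_b r' r 1) //; lia.
- case/orP=> [box_j|/andP [/eqP -> /eqP ->]]; last first.
    by rewrite no_box_k // (_ : x.+1 == x = false) ?andbF //; apply/eqP; lia.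
  case/orP=> [box_j1|/andP [_ /eqP j1]].
    case/orP=> [box_j'|/andP [/eqP -> /eqP j']]; first exact: nc2 le2j box_j box_j1 box_j'.
    apply: ltnW; apply: (above_b r k j le2j) => //; first lia.
    by rewrite nth_k j'.
  rewrite (_ : j == x = false) ?andbF ?orbF => [box_j'|]; last by apply/eqP; lia.
  by rewrite -(uniq_b r r' j) //; lia.
- rewrite (_ : j == x = false) ?andbF ?orbF; last by apply/eqP; lia.
  by apply: uniq_b; lia.
rewrite size_c nth_c; case/orP=> [box_j|/andP [/eqP -> /eqP ->]] lt_r'.
  case: eqP => [_|_ nth_r']; first lia.
  by apply: (above_b r r' j) => //; lia.
case: eqP => [_|ne_r'k nth_r']; first lia.
by rewrite ltn_neqAle eq_sym; apply/andP; split; [apply/eqP | apply: min_k].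
Qed.

End ForwardInvariants.

Lemma increasing_inv_act a T b : sorted (fun x y => y < x) T ->
  act T a = Some b -> increasing_inv a (head 0 T) b.
Proof.
elim: T b => [|x T IH] b /=; first by move=> _ [<-]; apply: increasing_inv_self.
move=> sorted_xT /act_consP [d act_d t_d].
have lt_head : head 0 T < x.
  by case: T sorted_xT {IH act_d} => [_|y T /andP []] //=; apply: t_op_gt0 t_d.
have inv_d := IH _ (path_sorted sorted_xT) act_d.
exact: increasing_inv_t_op (contains_act (contains_self a) act_d) inv_d lt_head t_d.
Qed.

Lemma hook_inv_act a e H g b : sorted leq H -> (forall x, x \in H -> x <= e) ->
  contains a g -> hook_inv a e g -> act H g = Some b -> hook_inv a (head e H) b.
Proof.
move=> + + a_in_g inv_g; elim: H b => [|x H IH] b /=; first by move=> _ _ [<-].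
move=> sorted_xH le_e /act_consP [d act_d t_d].
have le_e' y : y \in H -> y <= e by move=> mem_y; apply: le_e; rewrite in_cons mem_y orbT.
have le_head : x <= head e H.
  move: sorted_xH le_e; case: H {IH act_d le_e'} => [_ le_e|y H /andP [] //].
  by apply: le_e; rewrite mem_head.
have inv_d := IH _ (path_sorted sorted_xH) le_e' act_d.
exact: hook_inv_t_op (contains_act a_in_g act_d) inv_d le_head t_d.
Qed.

(* In [w = take k w ++ drop k w] the strictly decreasing part acts first,
   smallest letter first, and lays down a horizontal strip; the weakly
   increasing part then adds boxes in weakly decreasing columns. *)
Lemma act_reverse_hookword_nc a w b : reverse_hookword w -> act w a = Some b ->
  nc_first_col a b /\ nc_upper_cols a b.
Proof.
move=> [k [_ [sorted_H sorted_T]]] act_w.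
have sorted_H' : sorted leq (take k w).
  by rewrite -(take_takel _ (leqnSn k)); apply: take_sorted.
case act_T : (act (drop k w) a) => [g|]; last first.
  by move: act_w; rewrite -(cat_take_drop k w) (act_cat_None _ act_T).
have act_H : act (take k w) g = Some b by rewrite -(act_cat _ act_T) cat_take_drop.
have inv_g := hook_inv_of_increasing (sumn (take k w)) (increasing_inv_act sorted_T act_T).
have := hook_inv_act sorted_H' (fun x => @mem_leq_sumn _ x)
  (contains_act (contains_self a) act_T) inv_g act_H.
by case.
Qed.

Lemma interval_shape_act a w b : act w a = Some b ->
  interval_shape b a <-> connected_word w.
Proof.
move=> act_w; have supp_w j : in_supp b a j <-> j \in w.
  by rewrite in_suppE; apply: skew_col_act.
split=> [int_ba x y z mem_x mem_z le_y|conn_w j1 j j2 supp_j1 supp_j2 le_j].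
  by apply/supp_w; apply: (int_ba x y z) => //; apply/supp_w.
by apply/supp_w; apply: (conn_w j1 j j2) => //; apply/supp_w.
Qed.

Lemma act_crhw n w a b : CRHW n w -> act w a = Some b ->
  [/\ lt_c a b, nc_border_strip b a & size (skew_boxes b a) = n].
Proof.
move=> [size_w [_ [hook_w conn_w]]] act_w.
have [nc1 nc2] := act_reverse_hookword_nc hook_w act_w.
split.
- by apply: act_lt_c act_w; case: hook_w => k [lt_k _]; apply: leq_ltn_trans lt_k.
- by apply/nc_border_stripE; split=> //; apply/(interval_shape_act act_w).
- rewrite size_skew_boxes ?(act_sumn act_w) ?addKn //.
  exact: contains_act (contains_self a) act_w.
Qed.

(* A box in column [j] lies above every row of length [j - 1] that lies
   entirely in the inner shape: this is what the leftmost-part rule of [<_c]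
   leaves behind. *)
Definition above_inner_rows a b := forall r r' j, 1 < j -> skew_box a b r j ->
  r' < size b -> inner_row a b r' = j.-1 -> nth 0 b r' = j.-1 -> r < r'.

Lemma above_inner_rows_t_op a x b c : contains a b -> above_inner_rows a b ->
  t_op x b = Some c -> above_inner_rows a c.
Proof.
move=> a_in_b above_b t_b; have [le_ab inner_le] := a_in_b.
case: (ltnP 1 x) => [x_gt1|x_le1]; last first.
  have x1 : x = 1 by have := t_op_gt0 t_b; lia.
  move: t_b; rewrite x1 => -[<-].
  move=> [|r] r' j lt1j; rewrite ?skew_box_cons0 ?skew_box_consS //; first by case: eqP; lia.
  case: r' => [|r'] box_r /=; first by rewrite inner_row_cons0 //; lia.
  by rewrite inner_row_consS // ltnS; apply: above_b.
have [k [lt_k nth_k min_k size_c [box_c nth_c inner_c]]] := t_op_skew_box a_in_b t_b x_gt1.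
move=> r r' j lt1j; rewrite box_c size_c inner_c nth_c.
case/orP=> [box_r|/andP [/eqP -> /eqP ->]] lt_r' inner_r'.
  case: eqP => [r'k|_]; last exact: above_b.
  by have := inner_le _ lt_r'; rewrite inner_r' r'k nth_k; lia.
case: eqP => [_|ne_r'k nth_r']; first lia.
by rewrite ltn_neqAle eq_sym; apply/andP; split; [apply/eqP | apply: min_k].
Qed.

Lemma act_above_inner_rows a w b : act w a = Some b -> above_inner_rows a b.
Proof.
elim: w b => [|x w IH] b; first by move=> [<-] r r' j _; rewrite skew_box_self.
case/act_consP => d act_d; apply: above_inner_rows_t_op (IH _ act_d).
exact: contains_act (contains_self a) act_d.
Qed.

Definition crossing a b j :=
  has (fun r => skew_box a b r j && skew_box a b r j.+1) (iota 0 (size b)).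

Definition has_col a b j := has (fun r => skew_box a b r j) (iota 0 (size b)).

Lemma crossingP a b j :
  reflect (exists r, skew_box a b r j /\ skew_box a b r j.+1) (crossing a b j).
Proof.
apply: (iffP hasP) => [[r _ /andP [box_j box_j1]]|[r [box_j box_j1]]]; first by exists r.
by exists r; rewrite ?mem_iota ?(skew_box_row box_j) ?box_j.
Qed.

Lemma has_colP a b j : reflect (exists r, skew_box a b r j) (has_col a b j).
Proof.
apply: (iffP hasP) => [[r _ box_r]|[r box_r]]; first by exists r.
by exists r; rewrite ?mem_iota ?(skew_box_row box_r).
Qed.

Lemma skew_box_sumn a b r c : skew_box a b r c -> c <= sumn b.
Proof.
move=> box_r; apply: leq_trans (skew_box_col box_r) _.
by apply/mem_leq_sumn/mem_nth/(skew_box_row box_r).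
Qed.

Definition backward_inv a b := [/\ composition a, composition b, contains a b,
  above_inner_rows a b & nc_first_col a b /\ nc_upper_cols a b].

Lemma nc_mono a b a' b' f :
  (forall r c, skew_box a' b' r c -> skew_box a b (f r) c) ->
  (forall r r', f r <= f r' -> r <= r') ->
  nc_first_col a b /\ nc_upper_cols a b -> nc_first_col a' b' /\ nc_upper_cols a' b'.
Proof.
move=> box_f mono_f [nc1 nc2]; split=> [r r' box1 box2 box1'|r r' j le2j box_j box_j1 box_j'].
  by apply/mono_f/nc1; apply: box_f.
by apply/mono_f/(nc2 _ _ j); try apply: box_f.
Qed.

Section GrowInner.
Variable b : seq nat.

Lemma inner_row_shift a r : r < row_shift a b -> inner_row a b r = 0.
Proof. by rewrite /inner_row => ->. Qed.

Lemma inner_row_gt0 a r : composition a -> size a <= size b ->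
  row_shift a b <= r -> r < size b -> 0 < inner_row a b r.
Proof.
move=> comp_a le_ab le_r lt_r; rewrite /inner_row (ltnNge r) le_r /=.
by apply: composition_nth_gt0; rewrite /row_shift in le_r *; lia.
Qed.

Lemma inner_row_cons1 a r : 0 < row_shift a b ->
  inner_row (1 :: a) b r = if r == (row_shift a b).-1 then 1 else inner_row a b r.
Proof.
rewrite /inner_row /row_shift /= => shift_gt0.
have -> : size b - (size a).+1 = (size b - size a).-1 by lia.
case: eqP => [->|ne_r]; first by rewrite ltnn subnn.
case: ltnP => le_r; first by rewrite ifT //; lia.
rewrite ifF; last lia.
by rewrite (_ : r - (size b - size a).-1 = (r - (size b - size a)).+1) //; lia.
Qed.

Lemma inner_row_set_nth_inner a k v r : k < size a ->
  inner_row (set_nth 0 a k v) b r = if r == row_shift a b + k then v else inner_row a b r.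
Proof.
move=> lt_k; rewrite /inner_row /row_shift size_set_nth_lt //.
case: ltnP => le_r; first by case: eqP => // eq_r; lia.
by rewrite nth_set_nth /=; do 2 case: eqP => //; lia.
Qed.

Lemma skew_box_grow_inner a a' p j0 : inner_row a b p = j0.-1 -> 0 < j0 ->
  (forall r, inner_row a' b r = if r == p then j0 else inner_row a b r) ->
  forall r c, skew_box a' b r c = skew_box a b r c && ~~ ((r == p) && (c == j0)).
Proof.
move=> inner_p j0_gt0 inner_a' r c; rewrite /skew_box inner_a'.
case: eqP => [->|_] /=; last by rewrite andbT.
rewrite inner_p; case: (p < size b) => //=.
case: eqP => [->|ne_c] /=; first by rewrite ltnn andbF.
by rewrite andbT; case: (c <= nth 0 b p); rewrite ?andbT ?andbF //; apply/idP/idP; lia.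
Qed.

End GrowInner.

Lemma absorb_box a a' b p j0 : backward_inv a b ->
  skew_box a b p j0 -> skew_box a b p j0.+1 -> inner_row a b p = j0.-1 ->
  size a' <= size b ->
  (forall r, inner_row a' b r = if r == p then j0 else inner_row a b r) ->
  t_op j0 a = Some a' ->
  [/\ backward_inv a' b, exists r, skew_box a' b r j0.+1,
      forall x, crossing a' b x -> crossing a b x /\ x != j0 &
      forall r c, skew_box a b r c -> skew_box a' b r c \/ c = j0].
Proof.
move=> [comp_a comp_b [_ inner_le] above_b [nc1 nc2]] box_j0 box_j1 inner_p le_a'b inner_a' t_a.
have j0_gt0 : 0 < j0 by apply: t_op_gt0 t_a.
have box_a' := skew_box_grow_inner inner_p j0_gt0 inner_a'.
have box_sub r c : skew_box a' b r c -> skew_box a b r c by rewrite box_a' => /andP [].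
split.
- split=> //; first exact: t_op_composition t_a.
  + split=> // r lt_r; rewrite inner_a'; case: eqP => [->|_]; last exact: inner_le.
    by have := skew_box_col box_j1; lia.
  + move=> r r' j lt1j box_r lt_r'; rewrite inner_a'.
    case: eqP => [-> inner_p' nth_p|_]; last exact: above_b (box_sub _ _ box_r) lt_r'.
    by have := skew_box_col box_j1; lia.
  + exact: (nc_mono (f := id) box_sub).
- by exists p; rewrite box_a' box_j1 eqxx /= (_ : j0.+1 == j0 = false) //; apply/eqP; lia.
- move=> x /crossingP [y [box_x box_x1]]; split.
    by apply/crossingP; exists y; split; apply: box_sub.
  apply/eqP => x_j0; move: box_x box_x1; rewrite x_j0 => box_y box_y1.
  have y_p : y = p.
    have box_y' := box_sub _ _ box_y; have box_y1' := box_sub _ _ box_y1.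
    case: (ltnP 1 j0) => [lt1j0|le_j0].
      have := nc2 _ _ _ lt1j0 box_j0 box_j1 box_y'.
      by have := nc2 _ _ _ lt1j0 box_y' box_y1' box_j0; lia.
    move: box_j0 box_j1 box_y' box_y1'; rewrite (_ : j0 = 1); last lia.
    move=> box1 box2 box1' box2'; have := nc1 _ _ box1 box2 box1'.
    by have := nc1 _ _ box1' box2' box1; lia.
  by move: box_y; rewrite box_a' y_p !eqxx andbF.
- move=> r c box_r; rewrite box_a' box_r /=.
  by case: eqP => [_|]; case: eqP => [->|] /=; auto.
Qed.

(* The box [(p, j0)] can be moved into the inner shape by [t_j0]: row [p] is
   the topmost inner row of length [j0 - 1], otherwise [above_inner_rows] or
   the nc conditions would be violated. *)
Lemma absorb_box_t_op a b p j0 : backward_inv a b ->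
  skew_box a b p j0 -> skew_box a b p j0.+1 -> inner_row a b p = j0.-1 ->
  exists a', [/\ size a' <= size b,
    forall r, inner_row a' b r = if r == p then j0 else inner_row a b r &
    t_op j0 a = Some a'].
Proof.
move=> [comp_a comp_b [le_ab inner_le] above_b [nc1 nc2]] box_j0 box_j1 inner_p.
have lt_p : p < size b := skew_box_row box_j0.
case: (ltnP 1 j0) => [lt1j0|le_j0]; last first.
  have j01 : j0 = 1 by move: box_j0; case: (j0) le_j0 => [|[|]]; rewrite ?skew_box_col0.
  rewrite j01 in box_j0 box_j1 inner_p *.
  have lt_shift : p < row_shift a b.
    by rewrite ltnNge; apply/negP => le_p; have := inner_row_gt0 comp_a le_ab le_p lt_p; lia.
  have p_top : p = (row_shift a b).-1.
    have lt_top : (row_shift a b).-1 < size b by rewrite /row_shift in lt_shift *; lia.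
    have box_top : skew_box a b (row_shift a b).-1 1.
      by rewrite /skew_box lt_top inner_row_shift ?composition_nth_gt0 //; lia.
    by have := nc1 _ _ box_j0 box_j1 box_top; lia.
  exists (1 :: a); split; first by rewrite /row_shift in lt_shift *; simpl; lia.
    by move=> r; rewrite inner_row_cons1 -?p_top //; lia.
  by [].
have le_p : row_shift a b <= p.
  by rewrite leqNgt; apply/negP => lt_p'; move: inner_p; rewrite inner_row_shift //; lia.
set k := p - row_shift a b.
have lt_k : k < size a by rewrite /k /row_shift in le_p *; lia.
have nth_k : nth 0 a k = j0.-1 by rewrite -inner_p /inner_row (ltnNge p) le_p.
have first_k i : i < k -> nth 0 a i != nth 0 a k.
  move=> lt_ik; apply/eqP => nth_i; set y := row_shift a b + i.
  have lt_y : y < size b by rewrite /y /k in lt_ik *; lia.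
  have inner_y : inner_row a b y = j0.-1 by rewrite /inner_row /y ltnNge leq_addr /= addKn nth_i.
  have := inner_le _ lt_y; rewrite inner_y => le_y.
  case: (eqVneq (nth 0 b y) j0.-1) => [nth_y|ne_y].
    by have := above_b _ _ _ lt1j0 box_j0 lt_y inner_y nth_y; rewrite /y /k in lt_ik *; lia.
  have box_y : skew_box a b y j0 by rewrite /skew_box lt_y inner_y /=; lia.
  by have := nc2 _ _ _ lt1j0 box_j0 box_j1 box_y; rewrite /y /k in lt_ik *; lia.
exists (set_nth 0 a k j0); split.
- by rewrite size_set_nth_lt.
- by move=> r; rewrite inner_row_set_nth_inner // /k subnKC.
- by rewrite t_opE // -nth_k mem_nth // index_nth_first.
Qed.

Lemma absorb_min_crossing a b j0 : backward_inv a b -> crossing a b j0 ->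
  (forall j, crossing a b j -> j0 <= j) ->
  exists a', [/\ backward_inv a' b, t_op j0 a = Some a',
    exists r, skew_box a' b r j0.+1,
    forall x, crossing a' b x -> crossing a b x /\ j0 < x &
    forall r c, skew_box a b r c -> skew_box a' b r c \/ c = j0].
Proof.
move=> inv_ab /crossingP [p [box_j0 box_j1]] min_j0.
have [_ _ [_ inner_le] _ _] := inv_ab.
have lt_p : p < size b := skew_box_row box_j0.
have inner_p : inner_row a b p = j0.-1.
  have lt_inner : inner_row a b p < j0 by case/and3P: box_j0.
  case: (ltnP (inner_row a b p) j0.-1) => [lt_inner'|]; last lia.
  have : crossing a b j0.-1.
    apply/crossingP; exists p; rewrite prednK; last lia.
    by split=> //; rewrite /skew_box lt_p lt_inner' /=; have := skew_box_col box_j0; lia.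
  by move/min_j0; lia.
have [a' [le_a'b inner_a' t_a]] := absorb_box_t_op inv_ab box_j0 box_j1 inner_p.
have [inv_a'b box_a' cross_a' box_a] := absorb_box inv_ab box_j0 box_j1 inner_p le_a'b inner_a' t_a.
exists a'; split=> // x /cross_a' [cross_x ne_x]; split=> //.
by rewrite ltn_neqAle eq_sym ne_x min_j0.
Qed.

Definition removes_box a b m b' := [/\ backward_inv a b', t_op m b' = Some b,
  forall x, crossing a b' x -> crossing a b x,
  forall j, has_col a b' j -> has_col a b j &
  forall r c, skew_box a b r c -> c = m \/ exists r', skew_box a b' r' c].

(* A box in column 1 lies above the inner shape; as column 1 has no crossing,
   the first row of [b] is that single box. *)
Lemma remove_box_col1 a b r1 : backward_inv a b -> ~~ crossing a b 1 ->
  skew_box a b r1 1 -> exists b', removes_box a b 1 b'.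
Proof.
move=> [comp_a comp_b [le_ab inner_le] above_b [nc1 nc2]] no_cross box_r1.
have lt_r1 : r1 < size b := skew_box_row box_r1.
have lt_shift : r1 < row_shift a b.
  rewrite ltnNge; apply/negP => le_r1.
  by have := inner_row_gt0 comp_a le_ab le_r1 lt_r1; case/and3P: box_r1; lia.
case: b comp_b le_ab inner_le above_b nc1 nc2 no_cross box_r1 lt_r1 lt_shift =>
  [|x b'] // comp_b le_ab inner_le above_b nc1 nc2 no_cross box_r1 lt_r1 lt_shift.
have inner0 : inner_row a (x :: b') 0 = 0 by apply: inner_row_shift; lia.
have x1 : x = 1.
  have /= x_gt0 := composition_nth_gt0 comp_b (ltn0Sn _).
  apply: contraNeq no_cross => ne_x1; apply/crossingP; exists 0.
  by rewrite /skew_box inner0 /=; lia.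
subst x; have le_ab' : size a <= size b' by rewrite /row_shift /= in lt_shift; lia.
exists b'; split=> //.
- split=> //.
  + split=> // r lt_r; have := inner_le r.+1 lt_r; rewrite inner_row_consS //.
  + move=> r r' j lt1j box_r lt_r' inner_r' nth_r'.
    have := above_b r.+1 r'.+1 j lt1j; rewrite skew_box_consS // inner_row_consS //=.
    by move=> /(_ box_r lt_r' inner_r' nth_r').
  + by apply: (nc_mono (f := S) _ _ (conj nc1 nc2)) => [r c|r r'] /=; rewrite ?skew_box_consS.
- by move=> j /crossingP [y [box_y box_y1]]; apply/crossingP; exists y.+1; rewrite !skew_box_consS.
- by move=> j /has_colP [y box_y]; apply/has_colP; exists y.+1; rewrite skew_box_consS.
- move=> [|r] c; first by rewrite skew_box_cons0 // => /eqP; left.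
  by rewrite skew_box_consS // => box_r; right; exists r.
Qed.

(* With no crossings, the lowest box [(r0, m)] of column [m] ends its row; it
   is removable because no row above [r0] has length [m - 1]: such a row would
   either carry a box in the smaller column [m - 1] or be an inner row above
   the box [(r0, m)]. *)
Lemma remove_box_upper a b m r0 : backward_inv a b -> 1 < m ->
  ~~ crossing a b m -> (forall j, has_col a b j -> m <= j) ->
  skew_box a b r0 m -> (forall r, skew_box a b r m -> r <= r0) ->
  exists b', removes_box a b m b'.
Proof.
move=> [comp_a comp_b [le_ab inner_le] above_b [nc1 nc2]] lt1m no_cross min_m box_r0 max_r0.
have lt_r0 : r0 < size b := skew_box_row box_r0.
have lt_inner : inner_row a b r0 < m by case/and3P: box_r0.
have nth_r0 : nth 0 b r0 = m.
  have := skew_box_col box_r0; have : ~~ skew_box a b r0 m.+1.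
    by apply: contra no_cross => box_m1; apply/crossingP; exists r0.
  by rewrite /skew_box lt_r0 /= ltnW //=; lia.
set b' := set_nth 0 b r0 m.-1.
have size_b' : size b' = size b by rewrite size_set_nth_lt.
have inner_b' r : inner_row a b' r = inner_row a b r by rewrite inner_row_set_nth.
have nth_b' r : nth 0 b' r = if r == r0 then m.-1 else nth 0 b r by rewrite nth_set_nth.
have box_b' r c := skew_box_set_nth_pred r c lt_r0 lt_inner nth_r0.
have box_sub r c : skew_box a b' r c -> skew_box a b r c by rewrite box_b' => /andP [].
have first_r0 i : i < r0 -> nth 0 b' i != nth 0 b' r0.
  move=> lt_i; rewrite !nth_b' eqxx ifF; last by apply/eqP; lia.
  apply/eqP => nth_i; have lt_i' : i < size b by lia.
  case: (ltnP (inner_row a b i) m.-1) => [lt_inner_i|le_inner_i].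
    have : has_col a b m.-1.
      by apply/has_colP; exists i; rewrite /skew_box lt_i' lt_inner_i nth_i /=.
    by move/min_m; lia.
  have inner_i : inner_row a b i = m.-1 by have := inner_le _ lt_i'; lia.
  by have := above_b _ _ _ lt1m box_r0 lt_i' inner_i nth_i; lia.
exists b'; split.
- split=> //; first by apply: composition_set_nth => //; lia.
  + split=> [|r]; rewrite size_b' // => lt_r; rewrite inner_b' nth_b'.
    by case: eqP => [->|_]; [lia | apply: inner_le].
  + move=> r r' j lt1j box_r lt_r'; rewrite size_b' in lt_r'; rewrite inner_b' nth_b'.
    case: eqP => [->|_]; last exact: above_b (box_sub _ _ box_r) lt_r'.
    move=> _ eq_j; move: box_r; rewrite box_b' (_ : j = m); last lia.
    by rewrite eqxx andbT => /andP [/max_r0 le_r]; rewrite ltn_neqAle => ->.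
  + exact: (nc_mono (f := id) box_sub).
- have nth_b'r0 : nth 0 b' r0 = m.-1 by rewrite nth_b' eqxx.
  rewrite t_opE // -nth_b'r0 mem_nth ?size_b' // index_nth_first ?size_b' //.
  by rewrite /b' set_set_nth eqxx -nth_r0 set_nth_nth.
- by move=> x /crossingP [y [box_y box_y1]]; apply/crossingP; exists y; split; apply: box_sub.
- by move=> j /has_colP [y box_y]; apply/has_colP; exists y; apply: box_sub.
- move=> r c box_r; case: (eqVneq c m) => [->|ne_cm]; first by left.
  by right; exists r; rewrite box_b' box_r (negbTE ne_cm) andbF.
Qed.

Lemma remove_min_col a b m : backward_inv a b -> (forall j, ~~ crossing a b j) ->
  has_col a b m -> (forall j, has_col a b j -> m <= j) -> exists b', removes_box a b m b'.
Proof.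
move=> inv_ab no_cross /has_colP [r1 box_r1] min_m.
case: (ltnP 1 m) => [lt1m|le_m1].
  have bounded r : skew_box a b r m -> r <= size b by move/skew_box_row/ltnW.
  have [r0 box_r0 max_r0] := ex_maxnP (ex_intro (fun r => skew_box a b r m) r1 box_r1) bounded.
  exact: remove_box_upper inv_ab lt1m (no_cross m) min_m box_r0 max_r0.
have m1 : m = 1 by move: box_r1 le_m1; case: (m) => [|[|]]; rewrite ?skew_box_col0.
by move: box_r1; rewrite m1; apply: remove_box_col1 inv_ab (no_cross 1).
Qed.

(* [H ++ T] is the word we are looking for: the boxes of [b // a] lie in
   columns at most [last H], and every letter of [T] is a crossing column, so
   [last H > head T] once [T] is nonempty. *)
Definition hook_decomposition a b H T :=
  [/\ 0 < size H, sorted leq H, sorted (fun x y => y < x) T,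
      forall x, x \in T -> crossing a b x &
      forall r c, skew_box a b r c -> c <= last 0 H] /\ act (H ++ T) a = Some b.

Lemma hook_decomposition_absorb a a' b j0 :
  t_op j0 a = Some a' -> crossing a b j0 -> (exists r, skew_box a' b r j0.+1) ->
  (forall x, crossing a' b x -> crossing a b x /\ j0 < x) ->
  (forall r c, skew_box a b r c -> skew_box a' b r c \/ c = j0) ->
  (b = a' \/ exists H T, hook_decomposition a' b H T) ->
  exists H T, hook_decomposition a b H T.
Proof.
move=> t_a cross_j0 [r box_a'] cross_a' box_a
  [b_a'|[H [T [[H_gt0 sorted_H sorted_T cross_T le_last] act_HT]]]].
  by move: box_a'; rewrite b_a' skew_box_self.
have act_j0 : act [:: j0] a = Some a' by rewrite /= t_a.
exists H, (rcons T j0); split; last by rewrite -cats1 catA (act_cat _ act_j0).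
split=> //.
- case: T sorted_T cross_T {act_HT} => //= y T sorted_T cross_T; rewrite rcons_path sorted_T /=.
  by apply: (cross_a' _ (cross_T _ _)).2; rewrite mem_last.
- by move=> x; rewrite mem_rcons in_cons => /orP [/eqP -> //|/cross_T /cross_a' []].
- move=> r' c /box_a [/le_last //|->].
  by have := le_last _ _ box_a'; apply: leq_trans.
Qed.

Lemma hook_decomposition_remove a b b' m : removes_box a b m b' ->
  (forall j, has_col a b j -> m <= j) ->
  (b' = a \/ exists H T, hook_decomposition a b' H T) ->
  exists H T, hook_decomposition a b H T.
Proof.
move=> [_ t_b' cross_b' col_b' box_b] min_m
  [b'_a|[H [T [[H_gt0 sorted_H sorted_T cross_T le_last] act_HT]]]].
  exists [:: m], [::]; split; last by rewrite /= -b'_a.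
  split=> // r c /box_b [-> //|[r']]; by rewrite b'_a skew_box_self.
have le_m x : x \in H ++ T -> m <= x.
  by move=> /(skew_col_act act_HT) [r box_r]; apply/min_m/col_b'/has_colP; exists r.
have last_H : last 0 H \in H.
  by case: H H_gt0 {sorted_H le_last act_HT le_m} => // y H _; apply: mem_last.
exists (m :: H), T; split; last by rewrite /= act_HT.
split=> //.
- case: H H_gt0 sorted_H le_m {last_H le_last act_HT} => // y H _ /= -> le_m.
  by rewrite andbT; apply: le_m; rewrite mem_head.
- by move=> x /cross_T /cross_b'.
- have -> : last 0 (m :: H) = last 0 H by case: H H_gt0 {sorted_H le_last act_HT le_m last_H}.
  move=> r c /box_b [->|[r' /le_last //]].
  by apply: le_m; rewrite mem_cat last_H.
Qed.

Lemma backward_inv_decomposition N a b : sumn b - sumn a <= N -> backward_inv a b ->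
  b = a \/ exists H T, hook_decomposition a b H T.
Proof.
elim: N a b => [|N IH] a b le_N inv_ab; have [comp_a comp_b a_in_b _ _] := inv_ab;
  have le_sum := contains_sumn a_in_b.
  by left; apply: contains_sumn_eq => //; lia.
case: (posnP (sumn b - sumn a)) => [eq0|gt0]; first by left; apply: contains_sumn_eq => //; lia.
right; have [|r [c box_rc]] := skew_box_exists a_in_b; first lia.
case: (boolP (has (crossing a b) (iota 0 (sumn b)))) => [/hasP [j _ cross_j]|no_cross].
  have [j0 cross_j0 min_j0] := ex_minnP (ex_intro (crossing a b) j cross_j).
  have [a' [inv_a' t_a box_a' cross_a' box_a]] := absorb_min_crossing inv_ab cross_j0 min_j0.
  apply: (hook_decomposition_absorb t_a cross_j0 box_a' cross_a' box_a).
  by apply: IH inv_a'; rewrite (t_op_sumn t_a); lia.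
have no_cross_j j : ~~ crossing a b j.
  apply: contra no_cross => /[dup] cross_j /crossingP [r' [_ box_j1]].
  by apply/hasP; exists j; rewrite // mem_iota /=; have := skew_box_sumn box_j1.
have col_c : has_col a b c by apply/has_colP; exists r.
have [m col_m min_m] := ex_minnP (ex_intro (has_col a b) c col_c).
have [b' rem_b'] := remove_min_col inv_ab no_cross_j col_m min_m.
have [inv_b' t_b' _ _ _] := rem_b'.
apply: (hook_decomposition_remove rem_b' min_m).
by apply: IH inv_b'; move: le_N; rewrite (t_op_sumn t_b'); lia.
Qed.

Lemma hook_decomposition_reverse_hookword a b H T :
  hook_decomposition a b H T -> reverse_hookword (H ++ T).
Proof.
move=> [[H_gt0 sorted_H sorted_T cross_T le_last] _].
exists (size H).-1; rewrite size_cat prednK //; split; first lia.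
rewrite take_size_cat //; split=> //.
case/lastP: H H_gt0 le_last {sorted_H} => // H x _; rewrite last_rcons => le_x.
rewrite size_rcons -cats1 -catA drop_size_cat //=.
case: T sorted_T cross_T => //= y T -> cross_T; rewrite andbT.
by have /crossingP [r [_ /le_x]] := cross_T y (mem_head _ _).
Qed.

Theorem mainTheorem11 (alpha : seq nat) (n : nat) :
  composition alpha -> 1 <= n ->
  forall beta : seq nat,
    (exists w, CRHW n w /\ act w alpha = Some beta) <->
    (lt_c alpha beta /\ nc_border_strip beta alpha /\
     size (skew_boxes beta alpha) = n).
Proof.
move=> comp_alpha n_gt0 beta; split=> [[w [crhw_w act_w]]|[lt_ab [strip_ab size_ab]]].
  by have [] := act_crhw crhw_w act_w.
have [comp_beta [v _ act_v]] := lt_c_act comp_alpha lt_ab.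
have alpha_in_beta := contains_act (contains_self alpha) act_v.
have [int_ab nc1 nc2] := (nc_border_stripE alpha beta).1 strip_ab.
have inv_ab : backward_inv alpha beta by split=> //; apply: act_above_inner_rows act_v.
have [beta_alpha|[H [T dec_HT]]] := backward_inv_decomposition (leqnn _) inv_ab.
  by move: size_ab; rewrite size_skew_boxes // beta_alpha subnn; lia.
have [_ act_HT] := dec_HT.
exists (H ++ T); split=> //; split; last split; last split.
- by move: size_ab; rewrite size_skew_boxes // (act_sumn act_HT) addKn.
- exact: act_gt0 act_HT.
- exact: hook_decomposition_reverse_hookword dec_HT.
- exact/(interval_shape_act act_HT).
Qed.
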